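(* The image of $\phi\colon M\to\mathbb R^n\times\mathbb C^n$ is the set $K=\{(a,b)\in\mathbb R^n\times\mathbb C^n: a_k\geqslant|b_k|\ \text{for } k=1,\dots,d\}$. Moreover $\phi$ induces a finite-to-one surjection $\tilde\phi\colon M/\mathbb T^n\to K$, and the fibre of $\tilde\phi$ over $(a,b)\in K$ consists of exactly $2^m$ points, where $m$ is the number of indices $k$ with $a_k>|b_k|$.
   Context: Let $\mathbb C^{d,d}=\mathbb C^d\times\mathbb C^d$ with coordinates $(z,w)$, metric $g=\mathrm{Re}\sum_k(dz_k\,d\bar z_k-dw_k\,d\bar w_k)$, $I(z,w)=(iz,-iw)$, $S(z,w)=(w,z)$, $T=IS$, and forms $\omega_A(Y,Z)=g(Y,AZ)$. The torus $\mathbb T^d$ acts by $(z_k,w_k)\mapsto(e^{i\theta_k}z_k,e^{i\theta_k}w_k)$. Fix $u_1,\dots,u_d\in\mathbb Z^n$ spanning $\mathbb R^n$; let $\beta\colon\mathbb R^d\to\mathbb R^n$, $e_k\mapsto u_k$, $\mathfrak n=\ker\beta$ with inclusion $\iota$, and $N\subset\mathbb T^d$ the kernel of the induced homomorphism $\mathbb T^d\to\mathbb T^n$. Identify $\mathbb R^d$ with its dual by the standard inner product. Fix real constants $\lambda^{(j)}_k$ ($j=1,2,3$, $k=1,\dots,d$), put $\lambda^{(c)}_k=\lambda^{(2)}_k+i\lambda^{(3)}_k$, and let $\mu=(\mu_I,\mu_S,\mu_T)$ with $\mu_I(z,w)=\sum_k(\tfrac12(|z_k|^2+|w_k|^2)+\lambda^{(1)}_k)\iota^*e_k$,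 $(\mu_S+i\mu_T)(z,w)=\sum_k(iz_k\bar w_k+\lambda^{(c)}_k)\iota^*e_k$. Let $M=\mu^{-1}(0)/N$, with the residual action of $\mathbb T^n=\mathbb T^d/N$. For $(z,w)\in\mu^{-1}(0)$ there are unique $a\in\mathbb R^n$, $b\in\mathbb C^n$ with $\langle a,u_k\rangle=\tfrac12(|z_k|^2+|w_k|^2)+\lambda^{(1)}_k$ and $\langle b,u_k\rangle=iz_k\bar w_k+\lambda^{(c)}_k$ for all $k$ ($\langle\cdot,\cdot\rangle$ the standard inner product, extended complex-bilinearly); set $\phi([z,w])=(a,b)$. For $(a,b)\in\mathbb R^n\times\mathbb C^n$ write $a_k=\langle a,u_k\rangle-\lambda^{(1)}_k$, $b_k=\langle b,u_k\rangle-\lambda^{(c)}_k$. *)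

From mathcomp Require Import all_boot all_order all_algebra.
From mathcomp Require Import reals.
From mathcomp Require Export complex.
Set Implicit Arguments. Unset Strict Implicit. Unset Printing Implicit Defensive.
Import Order.TTheory GRing.Theory Num.Theory.
Local Open Scope ring_scope.

Section SplitHypertoric.
Variables (R : realType) (d n : nat).
(* the integer vectors u_1..u_d in Z^n are the rows of U *)
Variable U : 'M[int]_(d, n).
Variables (lam1 lam2 lam3 : 'I_d -> R).

Definition point := (('I_d -> R[i]) * ('I_d -> R[i]))%type.

(* U as a real matrix; the u_k span R^n iff this matrix is row-full *)
Definition Ureal : 'M[R]_(d, n) := map_mx (fun x : int => x%:~R) U.

Definition lamc (k : 'I_d) : R[i] := (lam2 k +i* lam3 k)%C.

(* x in n = ker beta, beta(e_k) = u_k *)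
Definition in_ker_beta (x : 'I_d -> R) : Prop :=
  forall i : 'I_n, \sum_(k < d) x k * (U k i)%:~R = 0.

(* coefficients of iota^* e_k in mu_I and mu_S + i mu_T *)
Definition muI_coef (p : point) (k : 'I_d) : R :=
  2^-1 * (Normc.normc (p.1 k) ^+ 2 + Normc.normc (p.2 k) ^+ 2) + lam1 k.
Definition muC_coef (p : point) (k : 'I_d) : R[i] :=
  'i%C * p.1 k * (p.2 k)^*%C + lamc k.

(* mu(p) = 0 in n^* (x) R^3: the functionals sum_k c_k iota^* e_k vanish on n *)
Definition mu_zero (p : point) : Prop :=
  forall x : 'I_d -> R, in_ker_beta x ->
    \sum_(k < d) x k * muI_coef p k = 0 /\
    \sum_(k < d) (x k)%:C%C * muC_coef p k = 0.

Definition pairR (a : 'I_n -> R) (k : 'I_d) : R :=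
  \sum_(i < n) a i * (U k i)%:~R.
Definition pairC (b : 'I_n -> R[i]) (k : 'I_d) : R[i] :=
  \sum_(i < n) b i * (U k i)%:~R.

Definition phi_rel (p : point) (a : 'I_n -> R) (b : 'I_n -> R[i]) : Prop :=
  forall k : 'I_d, pairR a k = muI_coef p k /\ pairC b k = muC_coef p k.

Definition a_k (a : 'I_n -> R) (k : 'I_d) : R := pairR a k - lam1 k.
Definition b_k (b : 'I_n -> R[i]) (k : 'I_d) : R[i] := pairC b k - lamc k.

Definition inK (a : 'I_n -> R) (b : 'I_n -> R[i]) : Prop :=
  forall k : 'I_d, Normc.normc (b_k b k) <= a_k a k.

Definition mcount (a : 'I_n -> R) (b : 'I_n -> R[i]) : nat :=
  #|[set k : 'I_d | Normc.normc (b_k b k) < a_k a k]|.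

End SplitHypertoric.

Definition torus_equiv (R : realType) (d : nat) (p q : point R d) : Prop :=
  exists t : 'I_d -> R[i],
    (forall k, Normc.normc (t k) = 1) /\
    (forall k, q.1 k = t k * p.1 k /\ q.2 k = t k * p.2 k).

From mathcomp Require Import all_boot all_order all_algebra.
From mathcomp Require Import reals complex.
From mathcomp Require Import ring lra.
Import Order.TTheory GRing.Theory Num.Theory.
Local Open Scope ring_scope.

Set Implicit Arguments.
Unset Strict Implicit.

(* Everything happens coordinatewise.  Since (a, b) pairs against every u_k,
   phi([z,w]) = (a,b) forces mu = 0, and amounts to
   (|z_k|^2 + |w_k|^2)/2 = a_k and i z_k conj(w_k) = b_k for each k.  Then
   |b_k| = |z_k||w_k| <= a_k by AM-GM, with equality iff |z_k| = |w_k|.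
   Conversely a_k and |b_k| fix the unordered pair of radii {|z_k|, |w_k|},
   which are distinct exactly when a_k > |b_k|; once it is decided which of
   z_k, w_k gets the larger radius, z_k conj(w_k) fixes (z_k, w_k) up to a
   common phase.  Hence the T^d-orbits in the fibre are labelled by the subsets
   of the m indices with a_k > |b_k|. *)

Section ComplexNorm.
Context {R : rcfType}.
Local Notation N := (@Normc.normc R).
Implicit Types z w : R[i].

Lemma normc_ge0 z : 0 <= N z.
Proof. by case: z => x y; rewrite /= sqrtr_ge0. Qed.

Lemma normc_conjc z : N (z^*)%C = N z.
Proof. by case: z => x y /=; rewrite sqrrN. Qed.

Lemma normc_i : N 'i%C = 1.
Proof. by rewrite /= expr0n expr1n add0r sqrtr1. Qed.

Lemma normc_real (r : R) : 0 <= r -> N r%:C%C = r.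
Proof. by move=> r_ge0 /=; rewrite expr0n addr0 sqrtr_sqr ger0_norm. Qed.

Lemma normc_eq0 z : (N z == 0) = (z == 0).
Proof. by apply/eqP/eqP => [/Normc.eq0_normc | ->]; rewrite ?Normc.normc0. Qed.

Lemma mulcJ_normc z : z * (z^*)%C = (N z ^+ 2)%:C%C.
Proof.
case: z => x y /=; rewrite sqr_sqrtr ?addr_ge0 ?sqr_ge0 //; apply/eqP.
by rewrite eq_complex /=; apply/andP; split; apply/eqP; ring.
Qed.

Lemma conjcM z w : ((z * w)^*)%C = (z^*)%C * (w^*)%C.
Proof. exact: rmorphM. Qed.

Lemma conjc_i : ('i%C^*)%C = - 'i%C :> R[i].
Proof. by apply/eqP; rewrite eq_complex /= oppr0 !eqxx. Qed.

Lemma rot_of_normc_conjM z w z' w' :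
  N z' = N z -> N w' = N w -> z' * (w'^*)%C = z * (w^*)%C ->
  exists t, N t = 1 /\ z' = t * z /\ w' = t * w.
Proof.
move=> Nz Nw zw.
have [z0 | z_neq0] := eqVneq z 0.
  have z'0 : z' = 0 by apply/eqP; rewrite -normc_eq0 Nz z0 normc_eq0.
  have [w0 | w_neq0] := eqVneq w 0.
    have w'0 : w' = 0 by apply/eqP; rewrite -normc_eq0 Nw w0 normc_eq0.
    by exists 1; rewrite Normc.normc1 z0 z'0 w0 w'0 !mulr0.
  exists (w' / w); rewrite Normc.normcM Normc.normcV Nw divff ?normc_eq0 //.
  by rewrite z0 z'0 mulr0 divfK.
exists (z' / z); rewrite Normc.normcM Normc.normcV Nz divff ?normc_eq0 //.
split=> //; split; first by rewrite divfK.
have zJw : (z'^*)%C * w' = (z^*)%C * w.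
  by move: (congr1 conjc zw); rewrite !rmorphM /= !conjcK.
have z'J_neq0 : (z'^*)%C != 0 by rewrite conjc_eq0 -normc_eq0 Nz normc_eq0.
apply: (mulfI z'J_neq0); rewrite zJw; symmetry.
transitivity (z' * (z'^*)%C * w / z); first by field.
by rewrite mulcJ_normc Nz -mulcJ_normc; field.
Qed.

End ComplexNorm.

Section MomentMap.
Context {R : rcfType}.
Local Notation N := (@Normc.normc R).
Implicit Types z w t : R[i].

Definition momentR z w : R := 2^-1 * (N z ^+ 2 + N w ^+ 2).
Definition momentC z w : R[i] := 'i%C * z * (w^*)%C.

Lemma normc_momentC z w : N (momentC z w) = N z * N w.
Proof. by rewrite !Normc.normcM normc_i normc_conjc mul1r. Qed.

Lemma momentR_sub_normc z w :
  momentR z w - N (momentC z w) = 2^-1 * (N z - N w) ^+ 2.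
Proof. by rewrite normc_momentC /momentR; field. Qed.

Lemma normc_momentC_le z w : N (momentC z w) <= momentR z w.
Proof.
by rewrite -subr_ge0 momentR_sub_normc mulr_ge0 ?invr_ge0 ?ler0n ?sqr_ge0.
Qed.

Lemma normc_momentC_lt z w : (N (momentC z w) < momentR z w) = (N z != N w).
Proof.
rewrite -subr_gt0 momentR_sub_normc pmulr_rgt0 ?invr_gt0 ?ltr0n //.
by rewrite lt0r sqr_ge0 andbT sqrf_eq0 subr_eq0.
Qed.

Lemma momentR_rot t z w : N t = 1 -> momentR (t * z) (t * w) = momentR z w.
Proof. by move=> Nt; rewrite /momentR !Normc.normcM Nt !mul1r. Qed.

Lemma momentC_rot t z w : N t = 1 -> momentC (t * z) (t * w) = momentC z w.
Proof.
move=> Nt; rewrite /momentC conjcM.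
transitivity ('i%C * z * (w^*)%C * (t * (t^*)%C)); first by ring.
by rewrite mulcJ_normc Nt expr1n mulr1.
Qed.

(* [x + y] and [|x - y|] are determined by [x^2 + y^2] and [x y]. *)
Lemma sqr_add_mul_inj (x y x' y' : R) :
  0 <= x -> 0 <= y -> 0 <= x' -> 0 <= y' ->
  x' ^+ 2 + y' ^+ 2 = x ^+ 2 + y ^+ 2 -> x' * y' = x * y ->
  (y' < x') = (y < x) -> x' = x /\ y' = y.
Proof.
move=> x0 y0 x'0 y'0 sq_eq mul_eq lt_eq.
have sqr_inj (u v : R) : 0 <= u -> 0 <= v -> u ^+ 2 = v ^+ 2 -> u = v.
  by move=> u0 v0 /eqP; rewrite eqrXn2 // => /eqP.
have add_eq : x' + y' = x + y by apply: sqr_inj; [lra | lra | lra].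
have [yx | xy] := ltP y x.
  have y'x' : y' < x' by rewrite lt_eq.
  have : x' - y' = x - y by apply: sqr_inj; [lra | lra | lra].
  by move=> sub_eq; split; lra.
have x'y' : x' <= y' by rewrite leNgt lt_eq -leNgt.
have : y' - x' = y - x by apply: sqr_inj; [lra | lra | lra].
by move=> sub_eq; split; lra.
Qed.

Lemma moment_fibre z w z' w' :
  momentR z' w' = momentR z w -> momentC z' w' = momentC z w ->
  (N w' < N z') = (N w < N z) ->
  exists t, N t = 1 /\ z' = t * z /\ w' = t * w.
Proof.
move=> momR_eq momC_eq lt_eq.
have mul_eq : N z' * N w' = N z * N w by rewrite -!normc_momentC momC_eq.
have sq_eq : N z' ^+ 2 + N w' ^+ 2 = N z ^+ 2 + N w ^+ 2.
  move: momR_eq; rewrite /momentR => /(mulfI _); apply.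
  by rewrite invr_eq0 pnatr_eq0.
have [Nz Nw] : N z' = N z /\ N w' = N w.
  by apply: sqr_add_mul_inj; rewrite ?normc_ge0.
apply: rot_of_normc_conjM => //.
have i_neq0 : 'i%C != 0 :> R[i] by rewrite -normc_eq0 normc_i oner_eq0.
by apply: (mulfI i_neq0); rewrite !mulrA.
Qed.

End MomentMap.

Section MomentLift.
Context {R : rcfType}.
Local Notation N := (@Normc.normc R).
Implicit Types (al rz rw : R) (be : R[i]).
Local Arguments Normc.normc : simpl never.

(* For [rz = 0] the constraint [rz rw = |be|] forces [be = 0]. *)
Definition lift_radii be rz rw : R[i] * R[i] :=
  if rz == 0 then (0, rw%:C%C) else (rz%:C%C, 'i%C * (be^*)%C / rz%:C%C).

Lemma lift_radiiP al be rz rw : 0 <= rz -> 0 <= rw ->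
  rz ^+ 2 + rw ^+ 2 = 2 * al -> rz * rw = N be ->
  [/\ N (lift_radii be rz rw).1 = rz, N (lift_radii be rz rw).2 = rw,
      momentR (lift_radii be rz rw).1 (lift_radii be rz rw).2 = al &
      momentC (lift_radii be rz rw).1 (lift_radii be rz rw).2 = be].
Proof.
move=> rz0 rw0 sq_eq mul_eq; rewrite /lift_radii /momentR /momentC.
have [rz_eq0 | rz_neq0] := eqVneq rz 0; rewrite /=.
  have be_eq0 : be = 0 by apply/eqP; rewrite -normc_eq0 -mul_eq rz_eq0 mul0r.
  have N0 : N 0 = 0 by apply/eqP; rewrite normc_eq0.
  rewrite N0 normc_real // be_eq0 mulr0 mul0r; split=> //.
  by move: sq_eq; rewrite rz_eq0; lra.
have rzC_neq0 : rz%:C%C != 0 :> R[i].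
  by rewrite -normc_eq0 normc_real.
have Nw : N ('i%C * (be^*)%C / rz%:C%C) = rw.
  rewrite !Normc.normcM Normc.normcV normc_i normc_conjc normc_real // mul1r.
  by rewrite -mul_eq; field.
rewrite normc_real // Nw; split=> //; first by rewrite sq_eq; field.
rewrite !conjcM conjcK conjc_inv conjc_real conjc_i.
transitivity (- ('i%C * 'i%C) * be * (rz%:C%C / rz%:C%C)); first by field.
by rewrite -expr2 sqr_i opprK mul1r divff // mulr1.
Qed.

(* The two radii are [sqrt (al +- sqrt (al^2 - |be|^2))]; [c] decides which
   of [z], [w] gets the larger one. *)
Definition moment_lift al be (c : bool) : R[i] * R[i] :=
  let s := Num.sqrt (al ^+ 2 - N be ^+ 2) in
  let r1 := Num.sqrt (al + s) in
  let r2 := Num.sqrt (al - s) in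
  if c then lift_radii be r1 r2 else lift_radii be r2 r1.

Lemma moment_liftP al be c : N be <= al ->
  [/\ momentR (moment_lift al be c).1 (moment_lift al be c).2 = al,
      momentC (moment_lift al be c).1 (moment_lift al be c).2 = be &
      (N (moment_lift al be c).2 < N (moment_lift al be c).1)
        = c && (N be < al)].
Proof.
move=> be_le; rewrite /moment_lift.
set s := Num.sqrt (al ^+ 2 - N be ^+ 2).
set r1 := Num.sqrt (al + s); set r2 := Num.sqrt (al - s).
have be0 := normc_ge0 be.
have disc0 : 0 <= al ^+ 2 - N be ^+ 2 by nra.
have s0 : 0 <= s by rewrite sqrtr_ge0.
have s_sqr : s ^+ 2 = al ^+ 2 - N be ^+ 2 by rewrite sqr_sqrtr.
have s_le : s <= al by nra.
have r1_sqr : r1 ^+ 2 = al + s by rewrite sqr_sqrtr //; lra.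
have r2_sqr : r2 ^+ 2 = al - s by rewrite sqr_sqrtr //; lra.
have r10 : 0 <= r1 by rewrite sqrtr_ge0.
have r20 : 0 <= r2 by rewrite sqrtr_ge0.
have sq_eq : r1 ^+ 2 + r2 ^+ 2 = 2 * al by lra.
have mul_eq : r1 * r2 = N be.
  apply/eqP; rewrite -(eqrXn2 (_ : 0 < 2)%N) ?mulr_ge0 //.
  by rewrite exprMn r1_sqr r2_sqr; apply/eqP; lra.
have r21 : (r2 < r1) = (N be < al).
  have al0 : 0 <= al by apply: le_trans be_le.
  by apply/idP/idP => lt; nra.
case: c => /=.
  by have [-> -> -> ->] := lift_radiiP r10 r20 sq_eq mul_eq.
have sq_eq' : r2 ^+ 2 + r1 ^+ 2 = 2 * al by lra.
have [-> -> -> ->] := lift_radiiP r20 r10 sq_eq' (etrans (mulrC _ _) mul_eq).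
by split=> //; apply/negbTE; rewrite -leNgt; nra.
Qed.

End MomentLift.

Lemma powerset_transversal (T : finType) (X : Type) (S : {set T})
    (P : X -> Prop) (E : X -> X -> Prop) (f : {set T} -> X) :
  (forall C : {set T}, C \subset S -> P (f C)) ->
  (forall C C' : {set T},
     C \subset S -> C' \subset S -> E (f C) (f C') -> C = C') ->
  (forall x, P x -> exists2 C : {set T}, C \subset S & E (f C) x) ->
  exists reps : 'I_(2 ^ #|S|) -> X,
    (forall j, P (reps j)) /\ (forall j j', E (reps j) (reps j') -> j = j') /\
    (forall x, P x -> exists j, E (reps j) x).
Proof.
move=> fP f_inj f_onto.
pose sub_of (j : 'I_(2 ^ #|S|)) :=
  enum_val (cast_ord (esym (card_powerset S)) j).
have sub_ofS j : sub_of j \subset S by rewrite -powersetE enum_valP.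
exists (fun j => f (sub_of j)); split; [|split].
- by move=> j; apply: fP.
- move=> j j' /f_inj; rewrite !sub_ofS => /(_ isT isT).
  by move/enum_val_inj/cast_ord_inj.
- move=> x /f_onto[C CS fCx]; have CP : C \in powerset S by rewrite powersetE.
  exists (cast_ord (card_powerset S) (enum_rank_in CP C)).
  by rewrite /sub_of cast_ordK enum_rankK_in.
Qed.

Section Fibres.
Variables (R : realType) (d n : nat) (U : 'M[int]_(d, n)).
Variables (lam1 lam2 lam3 : 'I_d -> R).
Local Notation N := (@Normc.normc R).
Local Notation phi := (phi_rel U lam1 lam2 lam3).
Local Notation ak := (a_k U lam1).
Local Notation bk := (b_k U lam2 lam3).
Implicit Types (p q : point R d) (a : 'I_n -> R) (b : 'I_n -> R[i]).

Lemma phi_relE p a b : phi p a b <->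
  forall k, momentR (p.1 k) (p.2 k) = ak a k /\ momentC (p.1 k) (p.2 k) = bk b k.
Proof.
have muE k : muI_coef lam1 p k = momentR (p.1 k) (p.2 k) + lam1 k /\
    muC_coef lam2 lam3 p k = momentC (p.1 k) (p.2 k) + lamc lam2 lam3 k by [].
rewrite /a_k /b_k; split=> [phi_pab k | mom_ab k].
  by case: (phi_pab k) (muE k) => -> -> [-> ->]; rewrite !addrK.
by case: (muE k) (mom_ab k) => -> -> [-> ->]; rewrite !subrK.
Qed.

Lemma pairR_ker a x : in_ker_beta U x -> \sum_(k < d) x k * pairR U a k = 0.
Proof.
move=> x_ker; rewrite /pairR; under eq_bigr do rewrite mulr_sumr.
rewrite exchange_big big1 // => i _.
transitivity (a i * \sum_(k < d) x k * (U k i)%:~R); last by rewrite x_ker mulr0.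
by rewrite mulr_sumr; apply: eq_bigr => k _; ring.
Qed.

Lemma pairC_ker b x : in_ker_beta U x ->
  \sum_(k < d) (x k)%:C%C * pairC U b k = 0.
Proof.
move=> x_ker; rewrite /pairC; under eq_bigr do rewrite mulr_sumr.
rewrite exchange_big big1 // => i _.
transitivity (b i * (\sum_(k < d) x k * (U k i)%:~R)%:C%C).
  rewrite rmorph_sum mulr_sumr; apply: eq_bigr => k _.
  by rewrite rmorphM /= -(rmorph_int (real_complex R)); ring.
by rewrite x_ker mulr0.
Qed.

Lemma phi_rel_mu_zero p a b : phi p a b -> mu_zero U lam1 lam2 lam3 p.
Proof.
move=> phi_pab x x_ker; split.
  by rewrite -[RHS](pairR_ker a x_ker); apply: eq_bigr => k _; rewrite (phi_pab k).1.
by rewrite -[RHS](pairC_ker b x_ker); apply: eq_bigr => k _; rewrite (phi_pab k).2.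
Qed.

Lemma phi_rel_inK p a b : phi p a b -> inK U lam1 lam2 lam3 a b.
Proof.
by move/phi_relE=> mom_ab k; case: (mom_ab k) => <- <-; apply: normc_momentC_le.
Qed.

Lemma phi_rel_torus p q a b : torus_equiv p q -> phi p a b -> phi q a b.
Proof.
move=> [t [Nt pq]] /phi_relE mom_ab; apply/phi_relE => k.
by case: (pq k) => -> ->; rewrite momentR_rot ?momentC_rot.
Qed.

Section FixedFibre.
Variables (a : 'I_n -> R) (b : 'I_n -> R[i]).
Hypothesis abK : inK U lam1 lam2 lam3 a b.
Implicit Types C : {set 'I_d}.

Let S := [set k | N (bk b k) < ak a k].

Definition lift_point (C : {set 'I_d}) : point R d :=
  (fun k => (moment_lift (ak a k) (bk b k) (k \in C)).1,
   fun k => (moment_lift (ak a k) (bk b k) (k \in C)).2).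

Lemma lift_point_phi C : phi (lift_point C) a b.
Proof. by apply/phi_relE => k; have [-> -> _] := moment_liftP (k \in C) (abK k). Qed.

Lemma lift_point_lt C k :
  (N ((lift_point C).2 k) < N ((lift_point C).1 k)) = (k \in C) && (k \in S).
Proof. by have [_ _ ->] := moment_liftP (k \in C) (abK k); rewrite inE. Qed.

Lemma lift_point_inj C (C' : {set 'I_d}) : C \subset S -> C' \subset S ->
  torus_equiv (lift_point C) (lift_point C') -> C = C'.
Proof.
move=> CS C'S [t [Nt CC']]; apply/setP => k.
have := lift_point_lt C' k; case: (CC' k) => -> ->.
rewrite !Normc.normcM Nt !mul1r lift_point_lt.
have [kS | kS] := boolP (k \in S); first by rewrite !andbT.
by rewrite (contraNF (subsetP CS k)) // (contraNF (subsetP C'S k)).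
Qed.

Lemma lift_point_onto p : phi p a b ->
  exists2 C : {set 'I_d}, C \subset S & torus_equiv (lift_point C) p.
Proof.
move=> /phi_relE mom_ab; set C := [set k in S | N (p.2 k) < N (p.1 k)].
exists C; first by apply/subsetP => k; rewrite inE => /andP[].
have rot k : exists t, N t = 1 /\
    p.1 k = t * (lift_point C).1 k /\ p.2 k = t * (lift_point C).2 k.
  have [momR_eq momC_eq] := mom_ab k.
  have [lift_R lift_C _] := moment_liftP (k \in C) (abK k).
  apply: moment_fibre; rewrite ?lift_point_lt ?lift_R ?lift_C // [k \in C]inE.
  have [kS | kS] /= := boolP (k \in S); first by rewrite andbT.
  (* off the strict set [|b_k| = a_k], which forces [|z_k| = |w_k|] *)
  suff -> : N (p.1 k) = N (p.2 k) by rewrite ltxx.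
  apply/eqP; rewrite -[_ == _]negbK -normc_momentC_lt momR_eq momC_eq.
  by move: kS; rewrite inE.
by have [t rot_t] := fin_all_exists rot; exists t; split=> k; case: (rot_t k).
Qed.

End FixedFibre.
End Fibres.

Unset Implicit Arguments.

Theorem proposition5p1 (R : realType) (d n : nat) (U : 'M[int]_(d, n))
    (lam1 lam2 lam3 : 'I_d -> R) :
  row_full (Ureal R U) ->
  (forall (a : 'I_n -> R) (b : 'I_n -> R[i]),
      (exists p : point R d, mu_zero U lam1 lam2 lam3 p /\
                             phi_rel U lam1 lam2 lam3 p a b)
      <-> inK U lam1 lam2 lam3 a b) /\
  (* phi is T^d-invariant, hence descends to M / T^n = mu^{-1}(0) / T^d *)
  (forall (p q : point R d) a b,
      mu_zero U lam1 lam2 lam3 p -> torus_equiv p q ->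
      phi_rel U lam1 lam2 lam3 p a b -> phi_rel U lam1 lam2 lam3 q a b) /\
  (* the fibre of the induced map over (a,b) in K has exactly 2^m points *)
  (forall a b, inK U lam1 lam2 lam3 a b ->
     exists reps : 'I_(2 ^ mcount U lam1 lam2 lam3 a b) -> point R d,
       (forall j, mu_zero U lam1 lam2 lam3 (reps j) /\
                  phi_rel U lam1 lam2 lam3 (reps j) a b) /\
       (forall j j', torus_equiv (reps j) (reps j') -> j = j') /\
       (forall p, mu_zero U lam1 lam2 lam3 p -> phi_rel U lam1 lam2 lam3 p a b ->
                  exists j, torus_equiv (reps j) p)).
Proof.
(* Row-fullness only makes (a, b) unique given p; phi_rel is a relation. *)
move=> _; split; [|split].
- move=> a b; split=> [[p [_ /phi_rel_inK //]] | abK].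
  exists (lift_point U lam1 lam2 lam3 a b set0).
  by split; [apply: phi_rel_mu_zero |]; apply: lift_point_phi.
- by move=> p q a b _; apply: phi_rel_torus.
move=> a b abK.
have [reps [reps_fibre [reps_inj reps_onto]]] :=
  powerset_transversal (P := fun p => mu_zero U lam1 lam2 lam3 p /\
                                      phi_rel U lam1 lam2 lam3 p a b)
    (fun C _ => conj (phi_rel_mu_zero (lift_point_phi abK C))
                     (lift_point_phi abK C))
    (lift_point_inj abK) (fun p '(conj _ phi_p) => lift_point_onto abK phi_p).
exists reps; split=> [//|]; split=> [//| p mu_p phi_p].
exact: reps_onto (conj mu_p phi_p).
Qed.
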